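(* For any combinatorial auction as described in the context, there exist finitely many valid cuts such that, after adding them as artificial items, there is a price vector $p$ (on original and artificial items) for which $(x^*,p)$ is a price-match equilibrium of the augmented auction; that is, PME prices can always be generated via cuts.
   Context: Combinatorial auction: item types $j\in\mathcal J$ with supply $c_j\in\mathbb Z_{\ge1}$ (vector $c$); bidders $\mathcal I$; finite set of bids $\mathcal K$, bid $k$ made by bidder $i(k)$ with bundle $a^k\in\mathbb Z^J_{\ge0}$, $a^k\le c$, and amount $b_k\ge0$; $\mathcal K_i$ = bids of bidder $i$; bids taken truthful. $\bm A$ = matrix with columns $a^k$, $\bm B$ with $\bm B_{i,k}=1$ iff $k\in\mathcal K_i$. Feasible allocation: $x\in\{0,1\}^K$, $\bm Ax\le c$, $\bm Bx\le\bm 1$. $x^*$ is an efficient (optimal total bid amount) feasible allocation; $a^{i*},b_{i*}$ are bundle and amount of $i$'s accepted bid ($\bm 0,0$ if none). A Walrasian equilibrium (WE) is $(x^*,p)$ with $p\ge0$, $s_i=b_{i*}-p\,a^{i*}\ge0$, $p\,a^k+s_{i(k)}\ge b_k$ for all bids $k$, and $p_j=0$ whenever item $j$ is in excess supply under $x^*$. A WE is a price-match equilibrium (PME) if for every bidder $i$ there is a feasible allocation $x^{-i}$ with $x^{-i}_k=0$ for $k\in\mathcal K_i$, $p\,a^k\le b_k$ whenever $x^{-i}_k=1$, and $p\bm Ax^{-i}=p\bm Ax^*$. A valid cut is $(\alpha,\alpha_0)$, $\alpha\in\mathbb R^K_{\ge0}$, with $\alpha x\le\alpha_0$ for every feasible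 allocation $x$ and $\alpha x^*=\alpha_0$. Adding it as an artificial item means appending $\alpha$ as a new row of $\bm A$ with supply $\alpha_0$ (feasible allocations are unchanged); WE and PME in the augmented auction are defined with these extra items treated like original ones. *)

From mathcomp Require Import all_boot all_order all_algebra.
From mathcomp Require Import reals.
Set Implicit Arguments. Unset Strict Implicit. Unset Printing Implicit Defensive.
Import Order.TTheory GRing.Theory Num.Theory.
Local Open Scope ring_scope.

Section Auction.
Variable R : realType.
Variables (Item Bid Bidder : finType).

(* A general (possibly augmented) auction: items of type Item, bundle matrix
   A j k (entry of item j in bid k), supply s j, bidder of each bid, amount b k.
   An allocation is x : Bid -> bool. *)

Definition alloc_use (A : Item -> Bid -> R) (x : Bid -> bool) (j : Item) : R :=
  \sum_(k : Bid) (x k)%:R * A j k.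

Definition feasible (A : Item -> Bid -> R) (s : Item -> R)
    (bidder : Bid -> Bidder) (x : Bid -> bool) : Prop :=
  (forall j, alloc_use A x j <= s j) /\
  (forall i : Bidder, \sum_(k : Bid | bidder k == i) (x k)%:R <= (1 : R)).

Definition value (b : Bid -> R) (x : Bid -> bool) : R :=
  \sum_(k : Bid) (x k)%:R * b k.

Definition efficient (A : Item -> Bid -> R) (s : Item -> R)
    (bidder : Bid -> Bidder) (b : Bid -> R) (x : Bid -> bool) : Prop :=
  feasible A s bidder x /\
  forall y, feasible A s bidder y -> value b y <= value b x.

Definition bundle_price (A : Item -> Bid -> R) (p : Item -> R) (k : Bid) : R :=
  \sum_(j : Item) p j * A j k.

(* s_i = b_{i*} - p a^{i*}  (the sum has at most one nonzero term since
   B x <= 1; it is 0 if i has no accepted bid) *)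
Definition surplus (A : Item -> Bid -> R) (bidder : Bid -> Bidder)
    (b : Bid -> R) (x : Bid -> bool) (p : Item -> R) (i : Bidder) : R :=
  \sum_(k : Bid | bidder k == i) (x k)%:R * (b k - bundle_price A p k).

Definition walrasian_eq (A : Item -> Bid -> R) (s : Item -> R)
    (bidder : Bid -> Bidder) (b : Bid -> R) (x : Bid -> bool) (p : Item -> R)
    : Prop :=
  [/\ efficient A s bidder b x,
      (forall j, 0 <= p j),
      (forall i, 0 <= surplus A bidder b x p i),
      (forall k, b k <= bundle_price A p k + surplus A bidder b x p (bidder k))
    & (forall j, alloc_use A x j < s j -> p j = 0)].

Definition price_match_eq (A : Item -> Bid -> R) (s : Item -> R)
    (bidder : Bid -> Bidder) (b : Bid -> R) (x : Bid -> bool) (p : Item -> R)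
    : Prop :=
  walrasian_eq A s bidder b x p /\
  forall i : Bidder, exists xi : Bid -> bool,
    [/\ feasible A s bidder xi,
        (forall k, bidder k = i -> xi k = false),
        (forall k, xi k -> bundle_price A p k <= b k)
      & \sum_(j : Item) p j * alloc_use A xi j
        = \sum_(j : Item) p j * alloc_use A x j].

End Auction.

Section Cuts.
Variable R : realType.
Variables (Item Bid Bidder : finType).

Definition valid_cut (A : Item -> Bid -> R) (s : Item -> R)
    (bidder : Bid -> Bidder) (x : Bid -> bool) (alpha : Bid -> R) (alpha0 : R)
    : Prop :=
  [/\ (forall k, 0 <= alpha k),
      (forall y, feasible A s bidder y -> \sum_(k : Bid) (y k)%:R * alpha k <= alpha0)
    & \sum_(k : Bid) (x k)%:R * alpha k = alpha0].

Definition aug_A (m : nat) (A : Item -> Bid -> R) (alpha : 'I_m -> Bid -> R)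
    : (Item + 'I_m)%type -> Bid -> R :=
  fun t k => match t with inl j => A j k | inr l => alpha l k end.

Definition aug_s (m : nat) (s : Item -> R) (alpha0 : 'I_m -> R)
    : (Item + 'I_m)%type -> R :=
  fun t => match t with inl j => s j | inr l => alpha0 l end.

End Cuts.

(** Let [x] be the efficient allocation, of value [V], and [v_i(y)] the
    amount of bidder [i]'s bid accepted in [y].  Choose surplus levels
    [s_i >= 0] and price each bid at [q_k = (b_k - s_{i(k)})^+].  For an
    allocation [y] with at most one bid per bidder,
    [q.y + sum_i s_i = sum_i max(s_i, v_i(y))].  So if [0 <= s <= v(x)] and
    [sum_i max(s_i, v_i(y)) <= V] for every feasible [y] (core constraints),
    then [q] is a valid cut, and it supports [x] with surpluses [s] once the
    cut is priced at [1] and the original items at [0].  Raising the [s_j]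
    greedily one bidder at a time, each as far as the core constraints
    allow, leaves every bidder [j] tight: some feasible allocation avoiding
    [j] attains [V], and that allocation is the [x^{-j}] a price-match
    equilibrium requires. *)
From mathcomp Require Import all_boot all_order all_algebra.
From mathcomp Require Import reals boolp.
From mathcomp Require Import ring lra.
Set Implicit Arguments.
Unset Strict Implicit.
Unset Printing Implicit Defensive.
Import Order.TTheory GRing.Theory Num.Theory.
Local Open Scope ring_scope.

Section Envelope.
Variables (R : realType) (Bidder : finType).
Implicit Types (s w : Bidder -> R) (j : Bidder) (d : R).

Definition envelope s w : R := \sum_l Num.max (s l) (w l).

Definition raise s j d : Bidder -> R :=
  fun l => if l == j then s l + d else s l.

Lemma le_envelope s s' w : (forall l, s l <= s' l) ->
  envelope s w <= envelope s' w.
Proof. by move=> le_ss'; apply: ler_sum => l _; apply: le_max2. Qed.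

Lemma envelope_r s w : (forall l, s l <= w l) -> envelope s w = \sum_l w l.
Proof. by move=> le_sw; apply: eq_bigr => l _; rewrite max_r. Qed.

Lemma envelope_agree_off s s' w w' j :
    (forall l, l != j -> Num.max (s l) (w l) = Num.max (s' l) (w' l)) ->
  envelope s w - Num.max (s j) (w j) = envelope s' w' - Num.max (s' j) (w' j).
Proof.
move=> agree; rewrite /envelope (bigD1 j) //= [in RHS](bigD1 j) //=.
by rewrite (eq_bigr _ agree); ring.
Qed.

Lemma envelope_raise s w j d :
  envelope (raise s j d) w
    = envelope s w + (Num.max (s j + d) (w j) - Num.max (s j) (w j)).
Proof.
have agree l : l != j -> Num.max (raise s j d l) (w l) = Num.max (s l) (w l).
  by move=> /negbTE l_j; rewrite /raise l_j.
have := envelope_agree_off agree; rewrite {2}/raise /= eqxx; lra.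
Qed.

End Envelope.

Section CoreSurplus.
Variables (R : realType) (T Bidder : finType).
Variables (P : pred T) (v : T -> Bidder -> R) (drop : T -> Bidder -> T).
Variable tstar : T.
Hypotheses (v_ge0 : forall t l, 0 <= v t l) (P_tstar : P tstar).
Hypothesis tstar_opt : forall t, P t -> \sum_l v t l <= \sum_l v tstar l.
Hypothesis P_drop : forall t j, P t -> P (drop t j).
Hypothesis v_drop_self : forall t j, v (drop t j) j = 0.
Hypothesis v_drop_other : forall t j l, l != j -> v (drop t j) l = v t l.

Local Notation V := (\sum_l v tstar l).
Implicit Types (s : Bidder -> R) (t : T) (j : Bidder) (d : R).

Definition in_core s :=
  (forall l, 0 <= s l <= v tstar l) /\ (forall t, P t -> envelope s (v t) <= V).

Definition tight s j := exists2 t, P t & envelope s (v (drop t j)) = V.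

Lemma envelope_drop s t j : 0 <= s j ->
  envelope s (v (drop t j)) = envelope s (v t) + (s j - Num.max (s j) (v t j)).
Proof.
move=> sj_ge0.
have agree l : l != j -> Num.max (s l) (v (drop t j) l) = Num.max (s l) (v t l).
  by move=> l_j; rewrite v_drop_other.
have := envelope_agree_off agree; rewrite v_drop_self max_l //; lra.
Qed.

Lemma in_core0 : in_core (fun=> 0).
Proof.
split=> [l|t Pt]; first by rewrite lexx v_ge0.
rewrite /envelope (eq_bigr (v t)); first exact: tstar_opt.
by move=> l _; rewrite max_r.
Qed.

Lemma in_core_raise s j d : in_core s -> 0 <= d -> s j + d <= v tstar j ->
    (forall t, P t -> d <= V - envelope s (v (drop t j))) ->
  in_core (raise s j d).
Proof.
move=> [s_bnd s_env] d_ge0 d_cap d_slack; have /andP[sj_ge0 _] := s_bnd j.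
split=> [l|t Pt].
  rewrite /raise; case: eqP => [->|_]; last exact: s_bnd.
  by apply/andP; split; lra.
(* If [v t j <= s j + d], the constraint for [t] is the one for [drop t j];
   otherwise raising [s j] does not affect it. *)
have := s_env t Pt; have := d_slack t Pt.
rewrite envelope_raise envelope_drop //.
have [vtj_le|vtj_gt] := leP (v t j) (s j + d); first lra.
by rewrite max_r; lra.
Qed.

Lemma tight_raise s j d l : 0 <= d -> in_core (raise s j d) ->
  tight s l -> tight (raise s j d) l.
Proof.
move=> d_ge0 [_ s'_env] [t Pt env_t]; exists t => //.
apply: le_anti; rewrite s'_env ?P_drop //= -{1}env_t.
apply: le_envelope => i; rewrite /raise; case: eqP => _ //; lra.
Qed.

Lemma in_core_raise_tight s j : in_core s ->
  exists2 d, 0 <= d & in_core (raise s j d) /\ tight (raise s j d) j.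
Proof.
move=> s_core; have [s_bnd s_env] := s_core.
have /andP[sj_ge0 sj_le] := s_bnd j.
pose slack t := V - envelope s (v (drop t j)).
have slack_ge0 t : P t -> 0 <= slack t.
  by move=> Pt; rewrite subr_ge0 s_env ?P_drop.
have env_raise_drop t d : 0 <= d ->
    envelope (raise s j d) (v (drop t j)) = envelope s (v (drop t j)) + d.
  by move=> d_ge0; rewrite envelope_raise v_drop_self !max_l //; [ring|lra].
case: (arg_minP slack P_tstar) => t0 Pt0 t0_min.
have [cap_le|slack_lt] := leP (v tstar j - s j) (slack t0).
  exists (v tstar j - s j); first lra.
  have core' : in_core (raise s j (v tstar j - s j)).
    apply: in_core_raise => //; [lra|lra|].
    by move=> t Pt; apply: le_trans cap_le (t0_min t Pt).
  split=> //; exists tstar => //.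
  have [s'_bnd _] := core'.
  rewrite envelope_drop; last by case/andP: (s'_bnd j).
  rewrite envelope_r => [|l]; last by case/andP: (s'_bnd l).
  by rewrite /raise eqxx max_r; [ring|lra].
have d_ge0 := slack_ge0 t0 Pt0.
exists (slack t0) => //; split; last first.
  by exists t0; rewrite // env_raise_drop // addrC subrK.
by apply: in_core_raise => //; lra.
Qed.

Lemma exists_core_tight : exists s, in_core s /\ forall j, tight s j.
Proof.
suff [s [s_core s_tight]] : exists s, in_core s /\
    forall j, j \in enum Bidder -> tight s j.
  by exists s; split => // j; apply: s_tight; rewrite mem_enum.
elim: (enum Bidder) => [|j r [s [s_core s_tight]]].
  by exists (fun=> 0); split => //; exact: in_core0.
have [d d_ge0 [core' tight_j]] := in_core_raise_tight j s_core.
exists (raise s j d); split=> // l; rewrite inE => /predU1P[-> //|l_r].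
exact: tight_raise (s_tight l l_r).
Qed.

End CoreSurplus.

Lemma sum_bool_le1_comp (R : numDomainType) (T : finType) (Q : pred T)
    (w : T -> bool) (g : T -> R) (f : R -> R) :
    f 0 = 0 -> \sum_(k | Q k) (w k)%:R <= 1 :> R ->
  \sum_(k | Q k) (w k)%:R * f (g k) = f (\sum_(k | Q k) (w k)%:R * g k).
Proof.
move=> f0; rewrite -natr_sum lern1 leq_eqVlt ltnS leqn0.
case/orP=> [/sum_nat_eq1[k [Qk wk1 w0]] | sum0].
  have wk : w k by move: wk1; case: (w k).
  rewrite (bigD1 k Qk) [in RHS](bigD1 k Qk) /= wk !mul1r.
  by rewrite !big1 ?addr0 // => l /andP[Ql lk]; rewrite w0 // mul0r.
have w_false l : Q l -> w l = false.
  move=> Ql; move: sum0; rewrite sum_nat_eq0 => /forall_inP/(_ l Ql).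
  by case: (w l).
by rewrite !big1 // => l Ql; rewrite w_false // mul0r.
Qed.

Section SingleCut.
Variables (R : realType) (Item Bid Bidder : finType).
Variables (A : Item -> Bid -> R) (S : Item -> R) (bidder : Bid -> Bidder).
Variable q : Bid -> R.

Local Notation cut_A := (aug_A A (fun _ : 'I_1 => q)).
Local Notation cut_s a0 := (aug_s S (fun _ : 'I_1 => a0)).

Definition cut_prices : Item + 'I_1 -> R :=
  fun t => if t is inr _ then 1 else 0.

Lemma bundle_price_cut k : bundle_price cut_A cut_prices k = q k.
Proof.
rewrite /bundle_price big_sumType big_ord1 /= mul1r big1 ?add0r // => j _.
exact: mul0r.
Qed.

Lemma revenue_cut y :
  \sum_t cut_prices t * alloc_use cut_A y t = value q y.
Proof.
rewrite big_sumType big_ord1 /= mul1r big1 ?add0r // => j _.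
exact: mul0r.
Qed.

Lemma feasible_cut a0 y :
  feasible cut_A (cut_s a0) bidder y <->
  feasible A S bidder y /\ value q y <= a0.
Proof.
split=> [[use_y unit_y]|[[use_y unit_y] q_y]].
  by split; [split=> // j; exact: (use_y (inl j)) | exact: (use_y (inr ord0))].
by split=> // -[j|l]; [exact: use_y | exact: q_y].
Qed.

Lemma price_match_cut b x s :
    efficient A S bidder b x ->
    (forall y, feasible A S bidder y -> value q y <= value q x) ->
    (forall i, \sum_(k | bidder k == i) (x k)%:R * (b k - q k) = s i) ->
    (forall i, 0 <= s i) -> (forall k, b k <= q k + s (bidder k)) ->
    (forall i, exists y, [/\ feasible A S bidder y,
        (forall k, bidder k = i -> y k = false),
        (forall k, y k -> q k <= b k) & value q y = value q x]) ->
  price_match_eq cut_A (cut_s (value q x)) bidder b x cut_prices.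
Proof.
move=> [x_feas x_opt] q_valid surplusE s_ge0 s_cover price_match.
have surplus_cut i : surplus cut_A bidder b x cut_prices i = s i.
  by rewrite -surplusE; apply: eq_bigr => k _; rewrite bundle_price_cut.
split; first split.
- split=> [|y /feasible_cut[y_feas _]]; last exact: x_opt.
  by apply/feasible_cut; split.
- by case=> t; rewrite /cut_prices ?ler01.
- by move=> i; rewrite surplus_cut.
- by move=> k; rewrite bundle_price_cut surplus_cut.
- by case=> [j|l] //; rewrite /alloc_use /= ltxx.
move=> i; have [y [y_feas y_avoid y_le y_rev]] := price_match i.
exists y; split=> //.
- by apply/feasible_cut; rewrite y_rev.
- by move=> k /y_le; rewrite bundle_price_cut.
- by rewrite !revenue_cut.
Qed.

End SingleCut.
Arguments cut_prices {R Item}.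

Section Auction.
Variables (R : realType) (Item Bid Bidder : finType).
Variables (A : Item -> Bid -> R) (S : Item -> R) (bidder : Bid -> Bidder).
Variable b : Bid -> R.
Implicit Types (x y : Bid -> bool) (s : Bidder -> R).

Definition bidder_value y l : R := \sum_(k | bidder k == l) (y k)%:R * b k.

Definition drop_bidder y j : Bid -> bool := fun k => y k && (bidder k != j).

Definition floor_price s k : R := Num.max (b k - s (bidder k)) 0.

Lemma feasible_sub y y' :
    (forall j k, 0 <= A j k) -> (forall k, y' k -> y k) ->
  feasible A S bidder y -> feasible A S bidder y'.
Proof.
move=> A_ge0 y'y [use_y unit_y].
have le_y k : (y' k)%:R <= (y k)%:R :> R.
  by rewrite ler_nat; case: (y' k) (y'y k) => // ->.
split=> [j|i]; [apply: le_trans (use_y j) | apply: le_trans (unit_y i)].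
  by apply: ler_sum => k _; apply: ler_wpM2r.
exact: ler_sum.
Qed.

Lemma sum_bidder_value y : \sum_l bidder_value y l = value b y.
Proof. by rewrite /value (partition_big bidder predT). Qed.

Lemma bidder_value_drop_self y j : bidder_value (drop_bidder y j) j = 0.
Proof.
by apply: big1 => k /eqP k_j; rewrite /drop_bidder k_j eqxx andbF mul0r.
Qed.

Lemma bidder_value_drop_other y j l : l != j ->
  bidder_value (drop_bidder y j) l = bidder_value y l.
Proof.
by move=> l_j; apply: eq_bigr => k /eqP k_l; rewrite /drop_bidder k_l l_j andbT.
Qed.

Lemma value_floor_price s y : (forall l, 0 <= s l) ->
    (forall l, \sum_(k | bidder k == l) (y k)%:R <= 1 :> R) ->
  value (floor_price s) y + \sum_l s l = envelope s (bidder_value y).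
Proof.
move=> s_ge0 unit_y; rewrite /value (partition_big bidder predT) //= -big_split.
apply: eq_bigr => l _ /=.
pose f u := Num.max (u - s l) 0.
have f0 : f 0 = 0 by rewrite /f max_r //; have := s_ge0 l; lra.
rewrite (eq_bigr (fun k => (y k)%:R * f (b k))); last first.
  by move=> k /eqP k_l; rewrite /floor_price k_l.
rewrite (sum_bool_le1_comp b f0 (unit_y l)) -/(bidder_value y l) /f.
have [le_sv|lt_vs] := leP (s l) (bidder_value y l).
  by rewrite max_l ?subr_ge0 //; ring.
by rewrite max_r; lra.
Qed.

Lemma sum_floor_price_surplus s x i :
    0 <= s i <= bidder_value x i ->
    \sum_(k | bidder k == i) (x k)%:R <= 1 :> R ->
  \sum_(k | bidder k == i) (x k)%:R * (b k - floor_price s k) = s i.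
Proof.
move=> /andP[si_ge0 si_le] unit_x.
pose f u := u - Num.max (u - s i) 0.
have f0 : f 0 = 0 by rewrite /f max_r; lra.
rewrite (eq_bigr (fun k => (x k)%:R * f (b k))); last first.
  by move=> k /eqP k_i; rewrite /floor_price k_i.
rewrite (sum_bool_le1_comp b f0 unit_x) -/(bidder_value x i) /f.
by rewrite max_l ?subr_ge0 //; ring.
Qed.

Definition tight_core_surplus x s := [/\
  forall l, 0 <= s l <= bidder_value x l,
  forall y, feasible A S bidder y -> envelope s (bidder_value y) <= value b x
& forall i, exists2 y, feasible A S bidder y &
    (forall k, bidder k = i -> y k = false) /\
    envelope s (bidder_value y) = value b x].

Lemma exists_tight_core_surplus x :
    (forall j k, 0 <= A j k) -> (forall k, 0 <= b k) ->
    efficient A S bidder b x ->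
  exists s, tight_core_surplus x s.
Proof.
move=> A_ge0 b_ge0 [x_feas x_opt].
have ffun_id y : fun_of_fin (finfun y) = y by apply/funext => k; rewrite ffunE.
pose P (t : {ffun Bid -> bool}) := `[< feasible A S bidder t >].
pose drop (t : {ffun Bid -> bool}) j := finfun (drop_bidder t j).
have v_ge0 (t : {ffun Bid -> bool}) l : 0 <= bidder_value t l.
  by apply: sumr_ge0 => k _; rewrite mulr_ge0 ?ler0n.
have P_x : P (finfun x) by apply/asboolP; rewrite ffun_id.
have x_max t : P t ->
    \sum_l bidder_value t l <= \sum_l bidder_value (finfun x) l.
  by move=> /asboolP t_feas; rewrite ffun_id !sum_bidder_value x_opt.
have P_drop t j : P t -> P (drop t j).
  move=> /asboolP t_feas; apply/asboolP; rewrite ffun_id.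
  by apply: feasible_sub t_feas => // k /andP[].
have drop_self t j : bidder_value (drop t j) j = 0.
  by rewrite ffun_id bidder_value_drop_self.
have drop_other t j l : l != j -> bidder_value (drop t j) l = bidder_value t l.
  by move=> l_j; rewrite ffun_id bidder_value_drop_other.
have [s [[s_bnd s_env] s_tight]] :=
  exists_core_tight v_ge0 P_x x_max P_drop drop_self drop_other.
exists s; split.
- by move=> l; have := s_bnd l; rewrite ffun_id.
- move=> y y_feas; have := s_env (finfun y); rewrite !ffun_id sum_bidder_value.
  by apply; apply/asboolP; rewrite ffun_id.
move=> i; have [t /asboolP t_feas] := s_tight i.
rewrite !ffun_id sum_bidder_value => env_t.
exists (drop_bidder t i); first by apply: feasible_sub t_feas => // k /andP[].
by split=> // k k_i; rewrite /drop_bidder k_i eqxx andbF.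
Qed.

Lemma floor_price_cut x s :
    (forall k, 0 <= b k) -> efficient A S bidder b x ->
    tight_core_surplus x s ->
  valid_cut A S bidder x (floor_price s) (value (floor_price s) x) /\
  price_match_eq (aug_A A (fun _ : 'I_1 => floor_price s))
    (aug_s S (fun _ : 'I_1 => value (floor_price s) x)) bidder b x cut_prices.
Proof.
move=> b_ge0 x_eff [s_bnd s_env s_tight]; have [[_ unit_x] _] := x_eff.
have s_ge0 l : 0 <= s l by case/andP: (s_bnd l).
have revenue_floor y : feasible A S bidder y ->
    value (floor_price s) y = envelope s (bidder_value y) - \sum_l s l.
  by case=> _ unit_y; rewrite -(value_floor_price s_ge0 unit_y); ring.
have revenue_x : value (floor_price s) x = value b x - \sum_l s l.
  rewrite revenue_floor; last by case: x_eff.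
  by rewrite envelope_r ?sum_bidder_value // => l; case/andP: (s_bnd l).
have q_valid y : feasible A S bidder y ->
    value (floor_price s) y <= value (floor_price s) x.
  move=> y_feas; have := s_env y y_feas.
  by rewrite revenue_floor // revenue_x; lra.
split; first by split=> // k; rewrite /floor_price le_max lexx orbT.
apply: (price_match_cut (s := s)) => //.
- by move=> i; apply: sum_floor_price_surplus.
- by move=> k; rewrite -lerBlDr /floor_price le_max lexx.
move=> i; have [y y_feas [y_avoid y_env]] := s_tight i.
exists y; split=> //.
- move=> k _; rewrite /floor_price ge_max b_ge0 andbT.
  by have := s_ge0 (bidder k); lra.
- by rewrite revenue_floor // revenue_x y_env.
Qed.

End Auction.

Theorem corollary2 (R : realType) (Item Bid Bidder : finType)
    (c : Item -> nat) (a : Bid -> Item -> nat) (b : Bid -> R)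
    (bidder : Bid -> Bidder) (xstar : Bid -> bool)
    (hc : forall j, (1 <= c j)%N)
    (ha : forall k j, (a k j <= c j)%N)
    (hb : forall k, 0 <= b k)
    (heff : efficient (fun j k => (a k j)%:R) (fun j => (c j)%:R) bidder b xstar) :
  exists (m : nat) (alpha : 'I_m -> Bid -> R) (alpha0 : 'I_m -> R),
    (forall l, valid_cut (fun j k => (a k j)%:R) (fun j => (c j)%:R) bidder xstar
                 (alpha l) (alpha0 l)) /\
    exists p : (Item + 'I_m)%type -> R,
      price_match_eq (aug_A (fun j k => (a k j)%:R) alpha)
                     (aug_s (fun j => (c j)%:R) alpha0) bidder b xstar p.
Proof.
have A_ge0 j k : 0 <= (a k j)%:R :> R := ler0n _ _.
have [s s_core] := exists_tight_core_surplus A_ge0 hb heff.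
have [cut pme] := floor_price_cut hb heff s_core.
exists 1%N, (fun=> floor_price bidder b s).
exists (fun=> value (floor_price bidder b s) xstar).
by split; last exists cut_prices.
Qed.
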